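(* Every solid branchwise implicative weak BCC-algebra is branchwise commutative.
   Context: A weak BCC-algebra is a set $X$ with a binary operation $*$ and a constant $0$ satisfying, for all $x,y,z\in X$: (i) $((x*y)*(z*y))*(x*z)=0$; (ii) $x*x=0$; (iii) $x*0=x$; (iv) $x*y=y*x=0$ implies $x=y$. The relation $x\leqslant y$ iff $x*y=0$ is a partial order on $X$. Let $I(X)$ be the set of minimal elements of $X$ with respect to $\leqslant$. For $a\in I(X)$ the branch initiated by $a$ is $B(a)=\{x\in X: a\leqslant x\}$; ''belonging to the same branch'' means lying in a common $B(a)$. A weak BCC-algebra is called (left) solid if $(x*y)*z=(x*z)*y$ holds for all $x,y$ belonging to the same branch and all $z\in X$. It is branchwise implicative if $x*(y*x)=x$ for all $x,y$ belonging to the same branch, and branchwise commutative if $x*(x*y)=y*(y*x)$ for all $x,y$ belonging to the same branch. *)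

Record weak_BCC (X : Type) (op : X -> X -> X) (z : X) : Prop := {
  wbcc_i   : forall x y w, op (op (op x y) (op w y)) (op x w) = z;
  wbcc_ii  : forall x, op x x = z;
  wbcc_iii : forall x, op x z = x;
  wbcc_iv  : forall x y, op x y = z -> op y x = z -> x = y
}.

Definition bcc_le {X : Type} (op : X -> X -> X) (z : X) (x y : X) : Prop :=
  op x y = z.

Definition minimal_elt {X : Type} (op : X -> X -> X) (z : X) (a : X) : Prop :=
  forall y, bcc_le op z y a -> y = a.

Definition in_branch {X : Type} (op : X -> X -> X) (z : X) (a x : X) : Prop :=
  bcc_le op z a x.

Definition same_branch {X : Type} (op : X -> X -> X) (z : X) (x y : X) : Prop :=
  exists a, minimal_elt op z a /\ in_branch op z a x /\ in_branch op z a y.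

Definition solid {X : Type} (op : X -> X -> X) (z : X) : Prop :=
  forall x y w, same_branch op z x y -> op (op x y) w = op (op x w) y.

Definition branchwise_implicative {X : Type} (op : X -> X -> X) (z : X) : Prop :=
  forall x y, same_branch op z x y -> op x (op y x) = x.

Definition branchwise_commutative {X : Type} (op : X -> X -> X) (z : X) : Prop :=
  forall x y, same_branch op z x y -> op x (op x y) = op y (op y x).


(* Let x, y lie in the branch of a minimal element a and put v := y*(y*x).
   Solidity gives v <= x, v <= y and y*(y*a) = a, whence a <= v and v is in
   the same branch as x.  Implicativity of v, x together with solidity then
   shows x*(x*v) = v, and antitonicity of r* in its argument, applied twice to
   v <= y, yields v = x*(x*v) <= x*(x*y).  Symmetry and antisymmetry finish. *)

Section WeakBCC.

Variables (X : Type) (op : X -> X -> X) (z : X).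
Hypothesis bcc : weak_BCC X op z.

Local Infix "⋆" := op (at level 40, left associativity).

Lemma op_le_antitone (x y r : X) : x ⋆ y = z -> (r ⋆ y) ⋆ (r ⋆ x) = z.
Proof.
  intros xy. pose proof (wbcc_i _ _ _ bcc r y x) as E.
  now rewrite xy, (wbcc_iii _ _ _ bcc) in E.
Qed.

Lemma same_branch_sym (x y : X) : same_branch op z x y -> same_branch op z y x.
Proof. intros [a [Ha [Hx Hy]]]. now exists a. Qed.

Lemma same_branch_of_below (a x y : X) :
  minimal_elt op z a -> a ⋆ x = z -> a ⋆ y = z -> same_branch op z x y.
Proof. intros Ha Hx Hy. now exists a. Qed.

Hypothesis sol : solid op z.

Lemma solid_le_left (x y : X) : same_branch op z x y -> (y ⋆ (y ⋆ x)) ⋆ x = z.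
Proof.
  intros Hs. rewrite <- (sol y x (y ⋆ x) (same_branch_sym _ _ Hs)).
  apply (wbcc_ii _ _ _ bcc).
Qed.

Lemma solid_minimal_fixed (a y : X) :
  minimal_elt op z a -> a ⋆ y = z -> y ⋆ (y ⋆ a) = a.
Proof.
  intros Ha Hy. apply Ha.
  apply (solid_le_left a y), (same_branch_of_below a); trivial.
  apply (wbcc_ii _ _ _ bcc).
Qed.

Hypothesis imp : branchwise_implicative op z.

Lemma commutative_half (x y : X) :
  same_branch op z x y -> (y ⋆ (y ⋆ x)) ⋆ (x ⋆ (x ⋆ y)) = z.
Proof.
  intros Hs. destruct Hs as [a [Ha [Hx Hy]]]. unfold in_branch, bcc_le in *.
  set (v := y ⋆ (y ⋆ x)).
  assert (vx : v ⋆ x = z) by (apply solid_le_left, (same_branch_of_below a); assumption).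
  assert (zero_op : z ⋆ (y ⋆ x) = z).
  { pose proof (wbcc_i _ _ _ bcc a x y) as E.
    now rewrite Hx, Hy, (wbcc_iii _ _ _ bcc) in E. }
  assert (vy : v ⋆ y = z).
  { unfold v. rewrite <- (sol y y (y ⋆ x)), (wbcc_ii _ _ _ bcc); trivial.
    now apply (same_branch_of_below a). }
  assert (av : a ⋆ v = z).
  { rewrite <- (solid_minimal_fixed a y) by trivial.
    now apply op_le_antitone, op_le_antitone. }
  assert (Hvx : same_branch op z v x) by now apply (same_branch_of_below a).
  assert (xxv : x ⋆ (x ⋆ v) = v).
  { apply (wbcc_iv _ _ _ bcc).
    - now apply solid_le_left.
    - pose proof (wbcc_i _ _ _ bcc v (x ⋆ v) x) as E.
      now rewrite (imp v x Hvx), vx, (wbcc_iii _ _ _ bcc) in E. }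
  rewrite <- xxv. now apply op_le_antitone, op_le_antitone.
Qed.

End WeakBCC.

Theorem theorem3p8 (X : Type) (op : X -> X -> X) (z : X) :
  weak_BCC X op z ->
  solid op z ->
  branchwise_implicative op z ->
  branchwise_commutative op z.
Proof.
  intros bcc sol imp x y Hs. apply (wbcc_iv _ _ _ bcc).
  - now apply commutative_half, same_branch_sym.
  - now apply commutative_half.
Qed.
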